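(* There is a function $\delta(n)\to0$ such that for every directed graph $G=(V,E)$ with $n$ nodes and every initial state, the convergence time of the \textsc{Random Pick} process is at most $4D\Delta_+\log_2 n$ with probability at least $1-\delta(n)$; and if $G$ is undirected, the convergence time is at most $20n\log_2 n$ with probability at least $1-\delta(n)$.
   Context: $G=(V,E)$ directed, $n=|V|$, $\Gamma_+(v)=\{u:(v,u)\in E\}$, $d_+(v)=|\Gamma_+(v)|$, $\Delta_+=\max_v d_+(v)$. $d(v,u)$ is the length of a shortest directed path from $v$ to $u$ ($\infty$ if none), and $D=\max\{d(v,u): d(v,u)\ne\infty\}$. $G$ is undirected if $(v,u)\in E\iff(u,v)\in E$. A state is a map $V\to\{b,r,u\}$ (blue, red, uncolored); colored means blue or red. \textsc{Random Pick} process: in each round $t=1,2,\dots$, every node $v$ with $d_+(v)\ge1$ picks an out-neighbor $ps_t(v)$ uniformly at random, independently; $\mathcal{S}_t(v)=\mathcal{S}_{t-1}(ps_t(v))$ if $\mathcal{S}_{t-1}(v)=u$ and $\mathcal{S}_{t-1}(ps_t(v))\ne u$, else $\mathcal{S}_t(v)=\mathcal{S}_{t-1}(v)$. A state is stable if no uncolored node has a colored out-neighbor. The convergence time is the smallest $t\ge0$ such that $\mathcal{S}_t$ is stable. *)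

From mathcomp Require Import all_boot.
From Stdlib Require Import Reals.

Set Implicit Arguments.
Unset Strict Implicit.
Unset Printing Implicit Defensive.

Inductive color := Blue | Red | Uncolored.

Definition is_unc (c : color) : bool :=
  match c with Uncolored => true | _ => false end.

Section RandomPick.
Variable V : finType.
Variable E : rel V.

Definition outN (v : V) : {set V} := [set u | E v u].
Definition outdeg (v : V) : nat := #|outN v|.
Definition maxoutdeg : nat := \max_(v : V) outdeg v.

Fixpoint walk (k : nat) (v u : V) : bool :=
  match k with
  | 0 => v == u
  | k'.+1 => [exists w, E v w && walk k' w u]
  end.

Definition is_dist (v u : V) (k : nat) : Prop :=
  walk k v u /\ forall j, j < k -> ~~ walk j v u.

Definition is_diam (D : nat) : Prop :=
  (exists v u, is_dist v u D) /\ (forall v u k, is_dist v u k -> k <= D).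

Definition state := V -> color.

Definition step (S : state) (p : V -> V) : state :=
  fun v => if is_unc (S v) && ~~ is_unc (S (p v)) then S (p v) else S v.

Definition stable (S : state) : bool :=
  [forall v, forall u, E v u ==> is_unc (S v) ==> is_unc (S u)].

(* A pick sequence for rounds 1..T: c t v = ps_{t+1}(v).  It is valid if
   every node with an out-neighbour picks an out-neighbour; nodes without
   out-neighbours pick nothing (encoded as picking themselves, which has no
   effect). The uniform distribution on valid pick sequences is exactly the
   product of independent uniform picks among out-neighbours. *)
Definition picks (T : nat) := {ffun 'I_T -> {ffun V -> V}}.

Definition valid_picks T (c : picks T) : bool :=
  [forall t, forall v,
     if [exists w, E v w] then E v (c t v) else c t v == v].

Definition pick_at T (c : picks T) (k : nat) : V -> V :=
  match @insub nat (fun k => k < T) 'I_T k with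
  | Some i => c i
  | None => fun v => v
  end.

Fixpoint run T (S0 : state) (c : picks T) (k : nat) : state :=
  match k with
  | 0 => S0
  | k'.+1 => step (run S0 c k') (pick_at c k')
  end.

Definition converged_by T (S0 : state) (c : picks T) : bool :=
  [exists k : 'I_T.+1, stable (run S0 c k)].

Definition prob_conv_by (T : nat) (S0 : state) : R :=
  (INR #|[set c : picks T | valid_picks c &
            converged_by S0 c]|
   / INR #|[set c : picks T | valid_picks c]|)%R.

End RandomPick.

(** A node that is uncolored while an out-neighbour is colored can see (by a
    walk) a node that was colored initially, since colors only travel along
    walks. For every such node [v] fix a shortest walk [q k -> ... -> q 0] from
    [v = q k] to an initially colored [q 0] and cut the rounds into consecutive
    windows, one per edge: if in window [i] the node [q (i+1)] picks [q i] at
    least once, the color reaches [v] by the end of the last window. A node of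
    out-degree [d] misses a fixed neighbour for [l] rounds with probability
    [(1 - 1/d)^l <= exp (-l/d)]. With windows of length [T/D] (directed case), or
    [d T / 3n] for a node of degree [d] (undirected case: no node has more
    than three neighbours on a shortest path, so the degrees along it sum to
    at most [3n]), every miss has probability at most [e / n^4], and a union bound
    over the at most [n^2] pairs [(v, i)] leaves a failure probability of
    [e / n^2 <= 6 / (n + 1)]. *)
From mathcomp Require Import all_boot zify.
From Stdlib Require Import Reals Lra Classical.
(* [Reals] rebinds [^] and [%N] on [nat]; restore the ssrnat notations. *)
Import ssrnat.

Set Implicit Arguments.
Unset Strict Implicit.
Unset Printing Implicit Defensive.

Lemma card_ffun_family (aT rT : finType) (F : aT -> pred rT) :
  #|[set f : {ffun aT -> rT} | [forall x, f x \in F x]]| = \prod_x #|F x|.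
Proof.
have := card_family (rT := fun=> rT) F; rewrite foldrE big_map big_enum /= => <-.
by apply: eq_card => f; rewrite inE; apply/forallP/familyP.
Qed.

Lemma card_ffun2_family (I J K : finType) (F : I -> J -> pred K) :
  #|[set c : {ffun I -> {ffun J -> K}} | [forall t, [forall v, c t v \in F t v]]]| =
  \prod_t \prod_v #|F t v|.
Proof.
rewrite -(eq_bigr _ (fun t _ => card_ffun_family (F t))) -card_ffun_family.
by apply: eq_card => c; rewrite !inE; apply: eq_forallb => t; rewrite inE.
Qed.

Lemma prod_nat_window (T a l m : nat) : a + l <= T ->
  \prod_(t < T) (if a <= t < a + l then m else 1) = m ^ l.
Proof.
move=> le_alT; rewrite -big_mkcond /= -(big_mkord (fun t => a <= t < a + l) (fun=> m)).
have -> : m ^ l = \prod_(a <= t < a + l) m by rewrite prod_nat_const_nat addKn.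
rewrite (big_nat_widenl _ _ _ _ _ (leq0n a)) (big_nat_widen _ _ _ _ _ le_alT).
by apply: eq_bigl => t; rewrite andbC.
Qed.

Lemma card_bigcup_le (I T : finType) (P : pred I) (B : I -> {set T}) :
  #|\bigcup_(i | P i) B i| <= \sum_(i | P i) #|B i|.
Proof.
elim/big_rec2: _ => [|i n U _ le_Un]; first by rewrite cards0.
by rewrite (leq_trans (leq_card_setU _ _).1) ?leq_add2l.
Qed.

Lemma INR_expn (m e : nat) : INR (m ^ e) = (INR m ^ e)%R.
Proof. by elim: e => [|e IH] //; rewrite expnS mult_INR IH. Qed.

Lemma INR_sum_le (I : finType) (F : I -> nat) (c : R) :
  (forall i, INR (F i) <= c)%R -> (INR (\sum_i F i) <= INR #|I| * c)%R.
Proof.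
move=> le_Fc; rewrite -sum1_card.
elim/big_rec2: _ => [|i m x _ le_mx]; first by rewrite Rmult_0_l; apply: Rle_refl.
by rewrite !plus_INR Rmult_plus_distr_r Rmult_1_l; apply: Rplus_le_compat.
Qed.

Lemma exp_le_exp (x y : R) : (x <= y)%R -> (exp x <= exp y)%R.
Proof. by case=> [/exp_increasing/Rlt_le | ->]; [| apply: Rle_refl]. Qed.

Lemma pow_exp (a : R) (m : nat) : (exp a ^ m = exp (INR m * a))%R.
Proof.
elim: m => [|m IH]; first by rewrite /= Rmult_0_l exp_0.
by rewrite S_INR /= IH -exp_plus; congr exp; ring.
Qed.

Lemma pow_pred_div_le_exp (d m : nat) : 0 < d ->
  ((INR d.-1 / INR d) ^ m <= exp (- (INR m / INR d)))%R.
Proof.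
move=> d_gt0; have d_pos : (0 < INR d)%R by apply/lt_0_INR/ltP.
have pred_d : INR d.-1 = (INR d - 1)%R by rewrite -{2}(prednK d_gt0) S_INR; ring.
have ratio_ge0 : (0 <= INR d.-1 / INR d)%R.
  by apply: Rmult_le_pos; [apply: pos_INR | left; apply: Rinv_0_lt_compat].
have ratio_le : (INR d.-1 / INR d <= exp (- / INR d))%R.
  have -> : (INR d.-1 / INR d = 1 + - / INR d)%R by rewrite pred_d; field; lra.
  exact: exp_ineq1_le.
apply: Rle_trans (pow_incr _ _ m (conj ratio_ge0 ratio_le)) _.
by rewrite pow_exp; right; congr exp; field; lra.
Qed.

(* Also for [n = 0], where Stdlib's [ln] returns the junk value [0]. *)
Lemma ln_INR_ge0 (n : nat) : (0 <= ln (INR n))%R.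
Proof.
case: n => [|n].
  by rewrite /ln; case: Rlt_dec => [lt00 | _]; [case: (Rlt_irrefl _ lt00) | apply: Rle_refl].
have x_ge1 : (1 <= INR n.+1)%R by apply: (le_INR 1); apply/leP.
rewrite -ln_1; case: (Rle_lt_or_eq _ _ x_ge1) => [lt1 | <-]; last exact: Rle_refl.
by apply/Rlt_le/ln_increasing; lra.
Qed.

Lemma ln_le_log2 (x : R) : (0 <= ln x)%R -> (ln x <= ln x / ln 2)%R.
Proof.
move=> lnx_ge0; have ln2_gt : (/ 2 < ln 2)%R := ln_lt_2.
have ln2_lt1 : (ln 2 < 1)%R.
  rewrite -(ln_exp 1); apply: ln_increasing; first lra.
  by have := exp_ineq1 1; lra.
apply: (Rmult_le_reg_r (ln 2)); first lra.
by rewrite /Rdiv Rmult_assoc Rinv_l ?Rmult_1_r; [nra | lra].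
Qed.

Lemma sqr_mul_exp_le (n : nat) :
  (INR n * INR n * exp (- (4 * ln (INR n) - 1)) <= 6 / (INR n + 1))%R.
Proof.
case: n => [|n]; first by rewrite /=; lra.
set x := INR n.+1; have x_ge1 : (1 <= x)%R by apply: (le_INR 1); apply/leP.
have -> : exp (- (4 * ln x - 1)) = (exp 1 / x ^ 4)%R.
  rewrite -(exp_ln x) ?pow_exp; last lra.
  by rewrite /Rdiv -exp_Ropp -exp_plus ln_exp; congr exp; rewrite /=; ring.
have := exp_le_3; have := exp_pos 1 => e_pos e_le3.
apply: (Rmult_le_reg_r (x * x * (x + 1))); first nra.
have -> : (x * x * (exp 1 / x ^ 4) * (x * x * (x + 1)) = exp 1 * (x + 1))%R by field; lra.
have -> : (6 / (x + 1) * (x * x * (x + 1)) = 6 * (x * x))%R by field; lra.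
nra.
Qed.

Lemma div_INR_succ_small (c eps : R) : (0 <= c)%R -> (0 < eps)%R ->
  exists N, forall n, N <= n -> (Rabs (c / (INR n + 1)) < eps)%R.
Proof.
move=> c_ge0 eps_pos; have [N N_large] := INR_unbounded (c / eps).
exists N => n le_Nn; have := le_INR _ _ (leP le_Nn); have := pos_INR n => n_ge0 le_NnR.
have n1_pos : (0 < INR n + 1)%R by lra.
rewrite Rabs_pos_eq; last by apply: Rmult_le_pos; [| left; apply: Rinv_0_lt_compat].
apply: (Rmult_lt_reg_r (INR n + 1)) => //.
rewrite /Rdiv Rmult_assoc Rinv_l; last lra.
have : (c / eps * eps < (INR n + 1) * eps)%R by apply: Rmult_lt_compat_r; lra.
by rewrite /Rdiv Rmult_assoc Rinv_l; lra.
Qed.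

Section Walks.
Variables (V : finType) (E : rel V).

Lemma outdeg_gt0 x y : E x y -> 0 < outdeg E x.
Proof. by move=> Exy; rewrite card_gt0; apply/set0Pn; exists y; rewrite inE. Qed.

Lemma walk_edge x y : E x y -> walk E 1 x y.
Proof. by move=> Exy; apply/existsP; exists y; rewrite Exy eqxx. Qed.

Lemma dist_edge x y : irreflexive E -> E x y -> is_dist E x y 1.
Proof.
move=> irrE Exy; split=> [|j]; first exact: walk_edge.
by rewrite ltnS leqn0 => /eqP-> /=; apply: contraTneq Exy => ->; rewrite irrE.
Qed.

Lemma walk_cat a b x y z : walk E a x y -> walk E b y z -> walk E (a + b) x z.
Proof.
elim: a x => [|a IH] x /=; first by move/eqP->.
by case/existsP=> w /andP[Exw wy] yz; apply/existsP; exists w; rewrite Exw (IH _ wy yz).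
Qed.

(* [rev_path k q]: q k -> q k.-1 -> ... -> q 0 is a walk; indices count from its end. *)
Definition rev_path (k : nat) (q : nat -> V) : Prop :=
  forall i, i < k -> E (q i.+1) (q i).

Lemma rev_path_walk k q i j : rev_path k q -> i <= j -> j <= k ->
  walk E (j - i) (q j) (q i).
Proof.
move=> qE le_ij le_jk.
suff : forall d, i + d <= k -> walk E d (q (i + d)) (q i).
  by move/(_ (j - i)); rewrite subnKC //; apply.
elim=> [|d IH] le_idk /=; first by rewrite addn0.
apply/existsP; exists (q (i + d)); rewrite IH ?andbT; last by rewrite ltnW // -addnS.
by rewrite addnS qE // -addnS.
Qed.

Lemma rev_path_of_walk j v u : walk E j v u ->
  exists q, [/\ rev_path j q, q j = v & q 0 = u].
Proof.
elim: j v => [|j IH] v /=; first by move/eqP->; exists (fun=> u).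
case/existsP=> w /andP[Evw /IH[q [qE qj q0]]].
exists (fun i => if i == j.+1 then v else q i); split=> [i lt_ij||]; rewrite ?eqxx //=.
rewrite eqSS (ltn_eqF lt_ij); case: eqP => [-> | /eqP ne_ij]; first by rewrite qj.
by apply: qE; rewrite ltn_neqAle ne_ij -ltnS.
Qed.

Definition shortest_rev_path (k : nat) (q : nat -> V) : Prop :=
  rev_path k q /\ forall j, j < k -> ~~ walk E j (q k) (q 0).

Lemma shortest_rev_path_of_walk j v u : walk E j v u ->
  exists k q, [/\ shortest_rev_path k q, q k = v & q 0 = u].
Proof.
move=> vu; have [k vu_k min_k] := ex_minnP (ex_intro (fun j => walk E j v u) j vu).
have [q [qE qk q0]] := rev_path_of_walk vu_k.
exists k, q; split=> //; split=> // i lt_ik; rewrite qk q0.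
by apply: contraTN lt_ik => /min_k; rewrite -leqNgt.
Qed.

Lemma shortest_rev_path_dist k q : shortest_rev_path k q -> is_dist E (q k) (q 0) k.
Proof.
by case=> qE min_k; split=> //; have := rev_path_walk qE (leq0n k) (leqnn k); rewrite subn0.
Qed.

Lemma shortest_rev_path_sub k q i j m : shortest_rev_path k q -> i <= j -> j <= k ->
  walk E m (q j) (q i) -> j - i <= m.
Proof.
move=> [qE min_k] le_ij le_jk ji; rewrite leqNgt; apply/negP => lt_m.
have := walk_cat (walk_cat (rev_path_walk qE le_jk (leqnn k)) ji)
                 (rev_path_walk qE (leq0n i) (leq_trans le_ij le_jk)).
by apply/negP; apply: min_k; lia.
Qed.

Lemma shortest_rev_path_lt_card k q : shortest_rev_path k q -> k < #|V|.
Proof.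
move=> short; rewrite -[k.+1]card_ord; apply: (@leq_card _ _ (fun i : 'I_k.+1 => q i)).
move=> i j eq_q; apply: val_inj.
wlog le_ij : i j eq_q / i <= j.
  by move=> wl; case: (leqP i j) => [|/ltnW] /wl; [apply | move=> eq_ji; apply/esym/eq_ji].
have := shortest_rev_path_sub short le_ij (ltn_ord j); rewrite /= eq_q => /(_ 0 (eqxx _)).
by rewrite leqn0 subn_eq0 => le_ji; apply/eqP; rewrite eqn_leq le_ij.
Qed.

Lemma shortest_rev_path_common_neighbour k q i j w : symmetric E ->
  shortest_rev_path k q -> i <= j -> j < k -> E (q i.+1) w -> E (q j.+1) w -> j - i <= 2.
Proof.
move=> symE short le_ij lt_jk Ei Ej.
rewrite -subSS; apply: (shortest_rev_path_sub short) => //.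
by apply: (walk_cat (walk_edge Ej)); rewrite walk_edge // symE.
Qed.

(* Neighbours of [w] on the path are at most two steps apart, so [i %% 3] tells them apart. *)
Lemma card_shortest_rev_path_neighbours k q w : symmetric E -> shortest_rev_path k q ->
  #|[set i : 'I_k | E (q i.+1) w]| <= 3.
Proof.
move=> symE short; rewrite -[3]card_ord.
apply: (@leq_card_in _ _ (fun i : 'I_k => inord (i %% 3) : 'I_3)) => i j.
rewrite !inE => Ei Ej /(congr1 val); rewrite /= !inordK ?ltn_pmod // => eq_mod.
apply: val_inj; wlog le_ij : i j Ei Ej eq_mod / i <= j.
  by move=> wl; case: (leqP i j) => [|/ltnW] /wl; [apply | move=> eq_ji; apply/esym/eq_ji].
by have := shortest_rev_path_common_neighbour symE short le_ij (ltn_ord j) Ei Ej => /=; lia.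
Qed.

Lemma shortest_rev_path_sum_outdeg k q : symmetric E -> shortest_rev_path k q ->
  \sum_(i < k) outdeg E (q i.+1) <= 3 * #|V|.
Proof.
move=> symE short.
have outdegE x : outdeg E x = \sum_w E x w.
  by rewrite /outdeg -sum1_card big_mkcond; apply: eq_bigr => w _; rewrite inE; case: (E x w).
rewrite (eq_bigr _ (fun i _ => outdegE _)) exchange_big /= -[#|V|]sum1_card big_distrr /=.
apply: leq_sum => w _; rewrite muln1 -big_mkcond sum1dep_card.
exact: card_shortest_rev_path_neighbours.
Qed.

End Walks.

Section PickCounting.
Variables (V : finType) (E : rel V).

Definition pick_range (v : V) : pred V :=
  [pred w | if [exists u, E v u] then E v w else w == v].

Lemma valid_picksE T (c : picks V T) :
  valid_picks E c = [forall t, [forall v, c t v \in pick_range v]].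
Proof. by []. Qed.

Lemma card_pick_range x y : E x y -> #|pick_range x| = outdeg E x.
Proof.
move=> Exy; apply: eq_card => w; rewrite !inE.
by have -> : [exists u, E x u] by apply/existsP; exists y.
Qed.

Lemma valid_picks_exist T : 0 < #|[set c : picks V T | valid_picks E c]|.
Proof.
apply/card_gt0P; exists [ffun=> [ffun v => odflt v [pick w | E v w]]].
rewrite inE valid_picksE; apply/'forall_forallP => t v; rewrite !ffunE inE.
case: pickP => [w Evw | noE]; first by have -> : [exists u, E v u] by apply/existsP; exists w.
by have -> : [exists u, E v u] = false by apply/existsP => -[u]; rewrite noE.
Qed.

Lemma card_valid_picks T :
  #|[set c : picks V T | valid_picks E c]| = (\prod_v #|pick_range v|) ^ T.
Proof.
rewrite -[T in _ ^ T]card_ord -prod_nat_const -card_ffun2_family.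
by apply: eq_card => c; rewrite !inE valid_picksE.
Qed.

Definition miss_set T (x y : V) (a l : nat) : {set picks V T} :=
  [set c | valid_picks E c & [forall t : 'I_T, (a <= t < a + l) ==> (c t x != y)]].

Definition miss_range T (x y : V) (a l : nat) (t : 'I_T) (v : V) : pred V :=
  [pred w | (w \in pick_range v) && ~~ [&& a <= t < a + l, v == x & w == y]].

Lemma card_miss_set_prod T x y a l :
  #|miss_set T x y a l| = \prod_(t < T) \prod_v #|miss_range x y a l t v|.
Proof.
rewrite -card_ffun2_family; apply: eq_card => c; rewrite !inE valid_picksE.
apply/andP/'forall_forallP => [[/'forall_forallP valid /forallP avoid] t v | ok].
  rewrite inE valid /=; apply/and3P => -[win /eqP vx /eqP cy].
  by have := implyP (avoid t) win; rewrite -vx cy eqxx.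
split; first by apply/'forall_forallP => t v; case/andP: (ok t v).
apply/forallP => t; apply/implyP => win; apply/eqP => cy.
by have := ok t x; rewrite inE win cy !eqxx andbF.
Qed.

Lemma card_miss_set T x y a l : E x y -> a + l <= T ->
  #|miss_set T x y a l| * outdeg E x ^ l =
  #|[set c : picks V T | valid_picks E c]| * (outdeg E x).-1 ^ l.
Proof.
move=> Exy le_alT; set d := outdeg E x.
have -> : #|[set c : picks V T | valid_picks E c]| = \prod_(t < T) \prod_v #|pick_range v|.
  by rewrite card_valid_picks prod_nat_const card_ord.
rewrite card_miss_set_prod -(prod_nat_window d le_alT) -(prod_nat_window d.-1 le_alT).
rewrite -!big_split /=; apply: eq_bigr => t _; case: ifP => win; last first.
  rewrite !muln1; apply: eq_bigr => v _; apply: eq_card => w.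
  by rewrite inE win andbT.
rewrite (bigD1 x) // [in RHS](bigD1 x) //= (card_pick_range Exy).
have -> : #|miss_range x y a l t x| = d.-1.
  have Ex : [exists u, E x u] by apply/existsP; exists y.
  rewrite /d -(card_pick_range Exy) (cardD1 y (pick_range x)) [y \in _]inE Ex Exy add1n.
  by apply: eq_card => w; rewrite !inE win eqxx andbC.
have -> : \prod_(v | v != x) #|miss_range x y a l t v| = \prod_(v | v != x) #|pick_range v|.
  by apply: eq_bigr => v xv; apply: eq_card => w; rewrite inE (negbTE xv) /= andbF andbT.
by rewrite -/d mulnC mulnA [RHS]mulnAC.
Qed.

Lemma card_miss_set_le T x y a l : E x y -> a + l <= T ->
  (INR #|miss_set T x y a l| <=
   exp (- (INR l / INR (outdeg E x))) * INR #|[set c : picks V T | valid_picks E c]|)%R.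
Proof.
move=> Exy le_alT; set d := outdeg E x; have d_gt0 : 0 < d := outdeg_gt0 Exy.
have d_pos : (0 < INR d)%R by apply/lt_0_INR/ltP.
have := f_equal INR (card_miss_set Exy le_alT); rewrite !mult_INR !INR_expn -/d => card_eq.
have -> : INR #|miss_set T x y a l| =
          (INR #|[set c : picks V T | valid_picks E c]| * (INR d.-1 / INR d) ^ l)%R.
  rewrite /Rdiv Rpow_mult_distr pow_inv -Rmult_assoc -card_eq; field.
  by apply: pow_nonzero; lra.
rewrite Rmult_comm; apply: Rmult_le_compat_r; first exact: pos_INR.
exact: pow_pred_div_le_exp.
Qed.

End PickCounting.

Section Dynamics.
Variables (V : finType) (E : rel V) (S0 : state V).

Definition reaches_colored (v : V) : Prop :=
  exists u j, walk E j v u /\ ~~ is_unc (S0 u).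

Definition window_start (l : nat -> nat) (i : nat) : nat := \sum_(m < i) l m.

Lemma window_startS l i : window_start l i.+1 = window_start l i + l i.
Proof. by rewrite /window_start big_ord_recr. Qed.

Lemma window_start_mono l : {homo window_start l : i j / i <= j}.
Proof.
move=> i j le_ij; rewrite /window_start -(subnKC le_ij) big_split_ord /=.
exact: leq_addr.
Qed.

Lemma pick_at_ord T (c : picks V T) (t : 'I_T) : pick_at c t = c t.
Proof. by rewrite /pick_at; case: insubP => [i _ /val_inj -> // | ]; rewrite ltn_ord. Qed.

Lemma pick_at_valid T (c : picks V T) t v : valid_picks E c ->
  E v (pick_at c t v) \/ pick_at c t v = v.
Proof.
rewrite /pick_at; case: insubP => [i _ _ | _ _]; last by right.
rewrite valid_picksE => /'forall_forallP/(_ i v); rewrite inE.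
by case: ifP => _ pick_ok; [left | right; apply/eqP].
Qed.

Lemma run_colored_mono T (c : picks V T) t t' v : t <= t' ->
  ~~ is_unc (run S0 c t v) -> ~~ is_unc (run S0 c t' v).
Proof.
move=> /subnK <-; elim: (t' - t) => //= d IH /IH.
by rewrite /step; case: (run S0 c (d + t) v).
Qed.

Lemma run_colored_of_pick T (c : picks V T) t x y :
  ~~ is_unc (run S0 c t y) -> pick_at c t x = y -> ~~ is_unc (run S0 c t.+1 x).
Proof. by move=> col_y pick_y /=; rewrite /step pick_y col_y andbT; case: ifP => // /negbT. Qed.

Lemma run_colored_reaches T (c : picks V T) t v : valid_picks E c ->
  ~~ is_unc (run S0 c t v) -> reaches_colored v.
Proof.
move=> valid; elim: t v => [|t IH] v /=; first by exists v, 0; rewrite /= eqxx.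
rewrite /step; case: ifP => [/andP[_ /IH [u [j [pu col_u]]]] _ | _ /IH //].
have [Evp | pv] := pick_at_valid t v valid; last by exists u, j; rewrite -pv.
by exists u, j.+1; split=> //; apply/existsP; exists (pick_at c t v); rewrite Evp.
Qed.

Lemma run_colored_along_rev_path T (c : picks V T) k q l :
  ~~ is_unc (S0 (q 0)) ->
  (forall i, i < k -> exists2 t, window_start l i <= t < window_start l i.+1
                               & pick_at c t (q i.+1) = q i) ->
  forall j, j <= k -> ~~ is_unc (run S0 c (window_start l j) (q j)).
Proof.
move=> col_q0 hit; elim=> [|j IH] le_jk; first by rewrite /window_start big_ord0.
have [t /andP[le_t lt_t] pick_t] := hit j le_jk.
apply: (run_colored_mono lt_t); apply: run_colored_of_pick pick_t.
exact: run_colored_mono le_t (IH (ltnW le_jk)).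
Qed.

End Dynamics.

Lemma shortest_rev_paths_to_colored (V : finType) (E : rel V) (S0 : state V) :
  exists (k : V -> nat) (q : V -> nat -> V), forall v,
    shortest_rev_path E (k v) (q v) /\
    (reaches_colored E S0 v -> q v (k v) = v /\ ~~ is_unc (S0 (q v 0))).
Proof.
have /fin_all_exists [kq kqP] : forall v, exists kq : nat * (nat -> V),
    shortest_rev_path E kq.1 kq.2 /\
    (reaches_colored E S0 v -> kq.2 kq.1 = v /\ ~~ is_unc (S0 (kq.2 0))).
  move=> v; case: (classic (reaches_colored E S0 v)) => [[u [j [vu col_u]]] | not_reach].
    have [k [q [short qk q0]]] := shortest_rev_path_of_walk vu.
    by exists (k, q); split=> // _ /=; rewrite q0.
  by exists (0, fun=> v); split=> [|/not_reach //]; split=> // i; rewrite ltn0.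
by exists (fun v => (kq v).1), (fun v => (kq v).2).
Qed.

Section Probability.
Variables (V : finType) (E : rel V) (S0 : state V) (T : nat).

Local Notation valid := [set c : picks V T | valid_picks E c].
Local Notation nonconverged := [set c : picks V T | valid_picks E c & ~~ converged_by E S0 c].

Lemma prob_conv_by_ge (p : R) : (INR #|nonconverged| <= p * INR #|valid|)%R ->
  (1 - p <= prob_conv_by E T S0)%R.
Proof.
move=> le_nc; have valid_pos : (0 < INR #|valid|)%R by apply/lt_0_INR/ltP/valid_picks_exist.
have split_valid :
    #|valid| = #|[set c : picks V T | valid_picks E c & converged_by E S0 c]| + #|nonconverged|.
  rewrite -(cardsID [set c | converged_by E S0 c] valid).
  by congr (_ + _); apply: eq_card => c; rewrite !inE andbC.
rewrite /prob_conv_by; apply: (Rmult_le_reg_r _ _ _ valid_pos).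
rewrite /Rdiv Rmult_assoc Rinv_l ?Rmult_1_r; last by apply: Rgt_not_eq.
have := f_equal INR split_valid; rewrite plus_INR; lra.
Qed.

Variables (k : V -> nat) (q : V -> nat -> V) (l : V -> nat -> nat).
Hypothesis shortest_q : forall v, shortest_rev_path E (k v) (q v).
Hypothesis source_q :
  forall v, reaches_colored E S0 v -> q v (k v) = v /\ ~~ is_unc (S0 (q v 0)).
Hypothesis windows_fit : forall v, window_start (l v) (k v) <= T.

Definition miss v i := miss_set E T (q v i.+1) (q v i) (window_start (l v) i) (l v i).

Lemma colored_unless_missed c v : valid_picks E c -> reaches_colored E S0 v ->
  (forall i, i < k v -> c \notin miss v i) -> ~~ is_unc (run S0 c T v).
Proof.
move=> valid reach no_miss; have [qk col_q0] := source_q reach.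
suff : ~~ is_unc (run S0 c (window_start (l v) (k v)) (q v (k v))).
  by rewrite qk; apply: run_colored_mono (windows_fit v).
apply: run_colored_along_rev_path (leqnn _) => // i lt_ik.
move: (no_miss i lt_ik); rewrite inE valid negb_forall => /existsP[t].
rewrite negb_imply negbK window_startS => /andP[win /eqP pick_t].
by exists t; rewrite // pick_at_ord.
Qed.

Lemma nonconverged_sub_miss :
  nonconverged \subset \bigcup_v \bigcup_(i < k v) miss v i.
Proof.
apply/subsetP => c; rewrite inE => /andP[valid]; apply: contraR => not_missed.
apply/existsP; exists ord_max; apply/'forall_forallP => v u /=.
apply/implyP => Evu; apply/implyP => unc_v; apply: contraLR unc_v => col_u.
apply: colored_unless_missed => // [|i lt_ik].
  have [w [j [uw col_w]]] := run_colored_reaches valid col_u.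
  by exists w, j.+1; split=> //; apply/existsP; exists u; rewrite Evu.
apply: contra not_missed => miss_i; apply/bigcupP; exists v => //.
by apply/bigcupP; exists (Ordinal lt_ik).
Qed.

Lemma card_miss_le (X : R) v i : i < k v ->
  (X * INR (outdeg E (q v i.+1)) <= INR (l v i))%R ->
  (INR #|miss v i| <= exp (- X) * INR #|valid|)%R.
Proof.
move=> lt_ik le_X; have Ei := (shortest_q v).1 i lt_ik.
have fits : window_start (l v) i + l v i <= T.
  by rewrite -window_startS (leq_trans (window_start_mono _ lt_ik) (windows_fit v)).
apply: Rle_trans (card_miss_set_le Ei fits) _.
apply/Rmult_le_compat_r/exp_le_exp/Ropp_le_contravar; first exact: pos_INR.
have d_pos : (0 < INR (outdeg E (q v i.+1)))%R by apply/lt_0_INR/ltP/outdeg_gt0/Ei.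
apply: (Rmult_le_reg_r _ _ _ d_pos).
by rewrite /Rdiv Rmult_assoc Rinv_l ?Rmult_1_r //; lra.
Qed.

Lemma card_nonconverged_le (X : R) :
  (forall v i, i < k v -> (X * INR (outdeg E (q v i.+1)) <= INR (l v i))%R) ->
  (INR #|nonconverged| <= INR #|V| * INR #|V| * exp (- X) * INR #|valid|)%R.
Proof.
move=> le_X.
have le_sum : #|nonconverged| <= \sum_v \sum_(i < k v) #|miss v i|.
  apply: leq_trans (subset_leq_card nonconverged_sub_miss) _.
  apply: leq_trans (card_bigcup_le xpredT _) _; apply: leq_sum => v _.
  exact: card_bigcup_le xpredT _.
apply: Rle_trans (le_INR _ _ (leP le_sum)) _; rewrite 2!Rmult_assoc.
apply: INR_sum_le => v.
apply: Rle_trans (INR_sum_le (fun i => card_miss_le (ltn_ord i) (le_X v i (ltn_ord i)))) _.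
rewrite card_ord; apply: Rmult_le_compat_r.
  by apply: Rmult_le_pos; [left; apply: exp_pos | apply: pos_INR].
by apply/le_INR/leP/ltnW/(shortest_rev_path_lt_card (shortest_q v)).
Qed.

Lemma prob_conv_by_log_windows n : #|V| = n ->
  (forall v i, i < k v ->
     ((4 * ln (INR n) - 1) * INR (outdeg E (q v i.+1)) <= INR (l v i))%R) ->
  (1 - 6 / (INR n + 1) <= prob_conv_by E T S0)%R.
Proof.
move=> card_V le_X; apply: Rle_trans _ (prob_conv_by_ge (card_nonconverged_le le_X)).
by rewrite card_V; apply/Rplus_le_compat_l/Ropp_le_contravar/sqr_mul_exp_le.
Qed.

End Probability.

Lemma prob_conv_by_diam (V : finType) (E : rel V) (S0 : state V) (n D T : nat) :
  #|V| = n -> irreflexive E -> is_diam E D ->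
  (4 * INR D * INR (maxoutdeg E) * (ln (INR n) / ln 2) < INR T + 1)%R ->
  (1 - 6 / (INR n + 1) <= prob_conv_by E T S0)%R.
Proof.
move=> card_V irrE [_ diam_max] T_large.
have [k [q kqP]] := shortest_rev_paths_to_colored E S0.
have short v := proj1 (kqP v); pose L := T %/ D.
have fits v : window_start (fun=> L) (k v) <= T.
  have k_le_D : k v <= D := diam_max _ _ _ (shortest_rev_path_dist (short v)).
  rewrite /window_start sum_nat_const card_ord (leq_trans _ (leq_divM T D)) //.
  by rewrite mulnC leq_mul2l k_le_D orbT.
apply: (prob_conv_by_log_windows short (fun v => proj2 (kqP v)) fits card_V).
move=> v i lt_ik; have Ei := (short v).1 i lt_ik.
set d := outdeg E (q v i.+1); set Delta := maxoutdeg E in T_large *.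
have D_gt0 : 0 < D := diam_max _ _ _ (dist_edge irrE Ei).
have ceilR : (INR T + 1 <= (INR L + 1) * INR D)%R.
  by rewrite -!S_INR -mult_INR; apply/le_INR/leP/ltn_ceil.
have DR : (1 <= INR D)%R by apply: (le_INR 1); apply/leP.
have dR : (1 <= INR d)%R by apply: (le_INR 1); apply/leP/outdeg_gt0/Ei.
have d_le : (INR d <= INR Delta)%R by apply/le_INR/leP/leq_bigmax.
have ln_ge0 := ln_INR_ge0 n; have log2_ge := ln_le_log2 ln_ge0.
set y := (ln (INR n) / ln 2)%R in T_large log2_ge.
have L_large : (4 * INR Delta * y < INR L + 1)%R by apply: (Rmult_lt_reg_r (INR D)); lra.
have : (ln (INR n) * INR d <= y * INR Delta)%R by apply: Rmult_le_compat; lra.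
lra.
Qed.

Lemma prob_conv_by_symmetric (V : finType) (E : rel V) (S0 : state V) (n T : nat) :
  #|V| = n -> symmetric E -> (20 * INR n * (ln (INR n) / ln 2) < INR T + 1)%R ->
  (1 - 6 / (INR n + 1) <= prob_conv_by E T S0)%R.
Proof.
move=> card_V symE T_large.
have [k [q kqP]] := shortest_rev_paths_to_colored E S0.
have short v := proj1 (kqP v); pose M := T %/ (3 * n).
have fits v : window_start (fun i => outdeg E (q v i.+1) * M) (k v) <= T.
  rewrite /window_start -big_distrl /= (leq_trans _ (leq_divM T (3 * n))) //.
  by rewrite mulnC leq_mul2l -card_V shortest_rev_path_sum_outdeg ?orbT.
apply: (prob_conv_by_log_windows short (fun v => proj2 (kqP v)) fits card_V).
move=> v i lt_ik; rewrite mult_INR Rmult_comm.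
apply: Rmult_le_compat_l; first exact: pos_INR.
have n_gt0 : 0 < n by rewrite -card_V; apply/card_gt0P; exists v.
have ceilR : (INR T + 1 <= (INR M + 1) * (3 * INR n))%R.
  have -> : (3 * INR n = INR (3 * n))%R by rewrite mult_INR /=; ring.
  by rewrite -!S_INR -mult_INR; apply/le_INR/leP/ltn_ceil; rewrite muln_gt0.
have nR : (1 <= INR n)%R by apply: (le_INR 1); apply/leP.
have ln_ge0 := ln_INR_ge0 n; have log2_ge := ln_le_log2 ln_ge0.
set y := (ln (INR n) / ln 2)%R in T_large log2_ge.
have : (20 * y < 3 * (INR M + 1))%R by apply: (Rmult_lt_reg_r (INR n)); lra.
lra.
Qed.

Theorem theorem3p2 :
  exists delta : nat -> R,
    (forall eps : R, (0 < eps)%R ->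
       exists N : nat, forall n : nat, (N <= n)%N -> (Rabs (delta n) < eps)%R) /\
    forall (n : nat) (V : finType) (E : rel V),
      #|V| = n ->
      irreflexive E ->
      forall S0 : V -> color,
        (forall (D : nat) (T : nat),
           is_diam E D ->
           let bound := (4 * INR D * INR (maxoutdeg E) * (ln (INR n) / ln 2))%R in
           (INR T <= bound < INR T + 1)%R ->
           (1 - delta n <= prob_conv_by E T S0)%R) /\
        (symmetric E ->
         forall T : nat,
           let bound := (20 * INR n * (ln (INR n) / ln 2))%R in
           (INR T <= bound < INR T + 1)%R ->
           (1 - delta n <= prob_conv_by E T S0)%R).
Proof.
exists (fun n => 6 / (INR n + 1))%R; split=> [eps | n V E card_V irrE S0].
  by apply: div_INR_succ_small; lra.
split=> [D T diamD bound [_ T_large] | symE T bound [_ T_large]].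
  exact: prob_conv_by_diam card_V irrE diamD T_large.
exact: prob_conv_by_symmetric card_V symE T_large.
Qed.
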